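(* Let $V$ be a locally convex topological real vector space, $C$ a cone in $V$ and $X$ a convex subset of $V$. (1) If $X$ is $C$-upward, then $\operatorname{qri}(X)$ is $C$-upward. (2) If $X$ is $C$-downward, then $\operatorname{qri}(X)$ is $C$-downward.
   Context: A cone in $V$ is a subset $C$ with $\lambda C\subseteq C$ for all $\lambda>0$ (possibly empty, need not contain $0$). $S$ is $C$-upward iff $S+C\subseteq S$; $C$-downward iff $S-C\subseteq S$. For a convex $Z\subseteq V$, with $\operatorname{cone}(A)=\{\lambda a:\lambda\ge0,a\in A\}$, the quasi-relative interior is $\operatorname{qri}(Z)=\{z\in Z:\operatorname{cl}(\operatorname{cone}(Z-z))\text{ is a linear subspace of }V\}$. *)

From HB Require Import structures.
From mathcomp Require Import all_boot all_order all_algebra.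
From mathcomp Require Import all_classical all_reals all_analysis.
Set Implicit Arguments. Unset Strict Implicit. Unset Printing Implicit Defensive.
Import Order.TTheory GRing.Theory Num.Theory.
Local Open Scope classical_set_scope.
Local Open Scope ring_scope.

(* A cone: lambda C ⊆ C for all lambda > 0 (may be empty, need not contain 0). *)
Definition is_cone (R : realType) (V : lmodType R) (C : set V) : Prop :=
  forall (l : R) (c : V), 0 < l -> C c -> C (l *: c).

Definition upward (R : realType) (V : lmodType R) (C S : set V) : Prop :=
  forall s c, S s -> C c -> S (s + c).

Definition downward (R : realType) (V : lmodType R) (C S : set V) : Prop :=
  forall s c, S s -> C c -> S (s - c).

Definition cone_hull (R : realType) (V : lmodType R) (A : set V) : set V :=
  [set x | exists l : R, exists2 a, A a & 0 <= l /\ x = l *: a].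

Definition is_subspace (R : realType) (V : lmodType R) (S : set V) : Prop :=
  S 0 /\ (forall x y, S x -> S y -> S (x + y)) /\
  (forall (a : R) x, S x -> S (a *: x)).

Definition translate_set (R : realType) (V : lmodType R) (Z : set V) (z : V) : set V :=
  [set x | exists2 w, Z w & x = w - z].

Definition qri (R : realType) (V : tvsType R) (Z : set V) : set V :=
  [set z | Z z /\ is_subspace (closure (cone_hull (translate_set Z z)))].

From HB Require Import structures.
From mathcomp Require Import all_boot all_order all_algebra.
From mathcomp Require Import all_classical all_reals all_analysis.
Import GRing.Theory.
Local Open Scope classical_set_scope.
Local Open Scope ring_scope.

(* If [X + d ⊆ X] and [z ∈ qri X], then [X - z ⊆ X - (z + d)], while the closed
   subspace [L = cl cone(X - z)] contains [d] and hence [X - (z + d) = (X - z) - d].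
   So [cl cone(X - (z + d)) = L] and [z + d ∈ qri X]. Upward (resp. downward)
   sets are stable under every such shift [d = c] (resp. [d = -c]) with [c ∈ C]. *)

Section SubspaceFacts.
Variables (R : realType) (V : lmodType R) (L : set V).
Hypothesis subL : is_subspace L.

Lemma subspaceB (x y : V) : L x -> L y -> L (x - y).
Proof.
case: subL => _ [addL scaleL] Lx Ly.
by rewrite -scaleN1r; apply: addL => //; apply: scaleL.
Qed.

Lemma cone_hull_sub_subspace (A : set V) : A `<=` L -> cone_hull A `<=` L.
Proof. by case: subL => _ [_ scaleL] AL _ [l [a Aa [_ ->]]]; apply/scaleL/AL. Qed.

End SubspaceFacts.

Section ClosedConeHull.
Variables (R : realType) (V : tvsType R).

Lemma sub_closure_cone_hull (A : set V) : A `<=` closure (cone_hull A).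
Proof. by move=> a Aa; apply: subset_closure; exists 1; exists a; rewrite ?scale1r. Qed.

Lemma closure_cone_hullS (A B : set V) :
  A `<=` B -> closure (cone_hull A) `<=` closure (cone_hull B).
Proof.
move=> AB; apply: closureS => _ [l [a Aa [l0 ->]]].
by exists l; exists a; first exact: AB.
Qed.

Lemma closure_cone_hull_sub_subspace (A L : set V) :
  closed L -> is_subspace L -> A `<=` L -> closure (cone_hull A) `<=` L.
Proof.
move=> clL subL AL; rewrite [X in _ `<=` X](closure_id L).1 //.
by apply: closureS; apply: cone_hull_sub_subspace.
Qed.

End ClosedConeHull.

Lemma translate_set_shift (R : realType) (V : lmodType R) (X : set V) (z d : V) :
  (forall w, X w -> X (w + d)) -> translate_set X z `<=` translate_set X (z + d).
Proof.
move=> Xd _ [w Xw ->]; exists (w + d); first exact: Xd.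
by rewrite opprD addrACA subrr addr0.
Qed.

Lemma qri_shift (R : realType) (V : tvsType R) (X : set V) (z d : V) :
  (forall w, X w -> X (w + d)) -> qri X z -> qri X (z + d).
Proof.
move=> Xd [Xz subL]; split; first exact: Xd.
set L := closure (cone_hull (translate_set X z)) in subL *.
have XL : translate_set X z `<=` L by apply: sub_closure_cone_hull.
suff -> : closure (cone_hull (translate_set X (z + d))) = L by [].
apply/seteqP; split; last exact/closure_cone_hullS/translate_set_shift.
apply: closure_cone_hull_sub_subspace => //; first exact: closed_closure.
move=> _ [w Xw ->]; rewrite opprD addrA; apply: (@subspaceB R V L subL).
  by apply: XL; exists w.
by apply: XL; exists (z + d); [exact: Xd | rewrite addrC addKr].
Qed.

Theorem lemma8 (R : realType) (V : tvsType R) (C X : set V) :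
  is_cone C -> convex_set (X : set (convex_lmodType V)) ->
  (upward C X -> upward C (qri X)) /\
  (downward C X -> downward C (qri X)).
Proof.
move=> _ _; split.
- move=> up s c qXs Cc; apply: (@qri_shift R V X s c) qXs => w Xw; exact: up.
- move=> down s c qXs Cc; apply: (@qri_shift R V X s (- c)) qXs => w Xw.
  exact: down.
Qed.
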